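(* Let $G_0^*$ be a $(k,r)$-regular hypergraph on $n$ vertices, and list the eigenvalues of $A(G_0^* )$ with multiplicity as $\lambda_1=r(k-1),\lambda_2,\dots,\lambda_n$. Let $b=\binom{n-1}{k-2}$, $N_j=n(n+1)^{j-1}$, and define matrices recursively by $\mathcal{A}^{(1)}=A(G_0^* )$ and, for $m\ge 2$, $$\mathcal{A}^{(m)}=\begin{bmatrix}\mathcal{A}^{(m-1)} & b\,(J_{1,n}\otimes I_{N_{m-1}})\\ b\,(J_{n,1}\otimes I_{N_{m-1}}) & A(G_0^* )\otimes I_{N_{m-1}}\end{bmatrix}$$ (an $N_m\times N_m$ matrix; it is the corona matrix of the hypergraph represented by $\mathcal{A}^{(m-1)}$ with $G_0^*$). Define $\phi_\pm(x)=\frac{x+r(k-1)\pm\sqrt{(x-r(k-1))^2+4nb^2}}{2}$, and for real $x$ define multisets $\Phi^0(x)=\{x\}$ and $\Phi^j(x)=\biguplus_{y\in\Phi^{j-1}(x)}\{\phi_+(y),\phi_-(y)\}$ for $j\ge1$ (so $\Phi^j(x)$ has $2^j$ elements counted with multiplicity). Then for every $m\ge1$ the spectrum of $\mathcal{A}^{(m)}$, as a multiset, is $$\biguplus_{i=1}^n\Phi^{m-1}(\lambda_i)\ \uplus\ \biguplus_{j=0}^{m-2}\ \biguplus_{i=2}^n\ \big(\Phi^j(\lambda_i)\text{ taken } n(n+1)^{m-j-2}\text{ times}\big).$$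
   Context: All hypergraphs are finite and simple: a hypergraph $G^*=(V,E)$ consists of a finite vertex set $V$ and a set $E$ of subsets of $V$ (hyperedges), each of size at least $2$. It is $k$-uniform if every hyperedge has exactly $k$ elements, and $(k,r)$-regular if it is $k$-uniform and every vertex lies in exactly $r$ hyperedges. For a hypergraph with vertices $v_1,\dots,v_n$, the adjacency matrix $A(G^* )$ is the $n\times n$ matrix whose $(i,j)$ entry, for $i\ne j$, is the number of hyperedges containing both $v_i$ and $v_j$, and whose diagonal entries are $0$. $J_{a,b}$ is the all-ones $a\times b$ matrix, $I_N$ the identity, $\otimes$ the Kronecker product, $\uplus$ multiset union. Binomial coefficients $\binom{x}{y}$ with integers $x\ge 0$ and $y$ are $0$ when $y<0$ or $y>x$. *)

From HB Require Import structures.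
From mathcomp Require Import all_boot all_order all_algebra.
Set Implicit Arguments. Unset Strict Implicit. Unset Printing Implicit Defensive.
Import Order.TTheory GRing.Theory Num.Theory.
Local Open Scope ring_scope.

Lemma kron_div_lt (a c i : nat) : (i < a * c)%N -> (i %/ c < a)%N.
Proof. by case: c => [|c]; rewrite ?muln0 // => h; rewrite ltn_divLR. Qed.

Lemma kron_mod_lt (a c i : nat) : (i < a * c)%N -> (i %% c < c)%N.
Proof. by case: c => [|c]; rewrite ?muln0 // => _; rewrite ltn_pmod. Qed.

(* (A \otimes B)[i*c + i', j*d + j'] = A[i,j] * B[i',j'] *)
Definition kron (R : pzRingType) (a b c d : nat)
    (A : 'M[R]_(a, b)) (B : 'M[R]_(c, d)) : 'M[R]_(a * c, b * d) :=
  \matrix_(i < a * c, j < b * d)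
    (A (Ordinal (kron_div_lt (ltn_ord i))) (Ordinal (kron_div_lt (ltn_ord j)))
     * B (Ordinal (kron_mod_lt (ltn_ord i))) (Ordinal (kron_mod_lt (ltn_ord j)))).

Definition is_hypergraph (n : nat) (E : {set {set 'I_n}}) : Prop :=
  forall e, e \in E -> (2 <= #|e|)%N.

Definition kr_regular (n : nat) (E : {set {set 'I_n}}) (k r : nat) : Prop :=
  (forall e, e \in E -> #|e| = k) /\
  (forall v : 'I_n, #|[set e in E | v \in e]| = r).

Definition hadj (R : pzRingType) (n : nat) (E : {set {set 'I_n}}) : 'M[R]_n :=
  \matrix_(i, j) (if i == j then 0
                  else (#|[set e in E | (i \in e) && (j \in e)]|)%:R).

(* b = binom(n-1, k-2), which is 0 when k - 2 < 0 *)
Definition bcoef (n k : nat) : nat := if (2 <= k)%N then 'C(n.-1, k - 2) else 0%N.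

(* size N_{m+1} = n (n+1)^m  (0-based index m: corona_mx m = \mathcal A^{(m+1)}) *)
Definition Nsz (n m : nat) : nat := (n * (n + 1) ^ m)%N.

Lemma NszS (n m : nat) : Nsz n m.+1 = (Nsz n m + n * Nsz n m)%N.
Proof. by rewrite /Nsz expnS mulnA [(n * (n + 1))%N]mulnC -mulnA mulnDl mul1n addnC. Qed.

Fixpoint corona_mx (R : pzRingType) (n : nat) (A0 : 'M[R]_n) (b : R) (m : nat)
  : 'M[R]_(Nsz n m) :=
  match m return 'M[R]_(Nsz n m) with
  | 0 => castmx (esym (muln1 n), esym (muln1 n)) A0
  | m'.+1 =>
      castmx (esym (NszS n m'), esym (NszS n m'))
        (block_mx (corona_mx A0 b m')
           (b *: castmx (mul1n _, erefl)
                    (kron (const_mx 1 : 'M[R]_(1, n)) (1%:M : 'M[R]_(Nsz n m'))))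
           (b *: castmx (erefl, mul1n _)
                    (kron (const_mx 1 : 'M[R]_(n, 1)) (1%:M : 'M[R]_(Nsz n m'))))
           (kron A0 (1%:M : 'M[R]_(Nsz n m'))))
  end.

Definition phi (R : rcfType) (c D : R) (plus : bool) (x : R) : R :=
  (x + c + (if plus then 1 else -1) * Num.sqrt ((x - c) ^+ 2 + D)) / 2.

Fixpoint Phi (R : rcfType) (c D : R) (j : nat) (x : R) : seq R :=
  match j with
  | 0 => [:: x]
  | j'.+1 => flatten [seq [:: phi c D true y; phi c D false y] | y <- Phi c D j' x]
  end.

(* the claimed spectrum of \mathcal A^{(m)} (1-based m), lam = [l_1; ...; l_n] *)
Definition corona_spec (R : rcfType) (n : nat) (c D : R) (lam : seq R) (m : nat)
  : seq R :=
  flatten [seq Phi c D m.-1 l | l <- lam] ++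
  flatten [seq flatten (nseq (n * (n + 1) ^ (m - j - 2))
                           (flatten [seq Phi c D j l | l <- behead lam]))
          | j <- iota 0 m.-1].

From HB Require Import structures.
From mathcomp Require Import all_boot all_order all_algebra perm.
From mathcomp Require Import mxtens ring.
Set Implicit Arguments. Unset Strict Implicit. Unset Printing Implicit Defensive.
Import Order.TTheory GRing.Theory Num.Theory.
Local Open Scope ring_scope.

(* Write c = r(k-1).  The corona matrix C of an N x N matrix P is
   [[P, bU], [bV, A (x) I_N]] with U = J_(1,n) (x) I_N and V = J_(n,1) (x) I_N.
   Since the all-ones vector is an eigenvector of A for c, right multiplication
   by [[(x-c) I, 0], [bV, I]] makes xI - C block upper triangular, whence
     det (xI - C) (x-c)^N = det ((x-c)(xI - P) - nb^2 I) det (xI - A)^N.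
   Substituting det (xI - A) = (x-c) prod_i (x - l_i), every eigenvalue mu of P
   contributes the factor (x-c)(x-mu) - nb^2, whose roots are phi_+(mu) and
   phi_-(mu), while each l_i with i >= 2 gains N more copies. *)

Lemma kronE (R : pzRingType) a b c d (A : 'M[R]_(a, b)) (B : 'M[R]_(c, d)) :
  kron A B = A *t B.
Proof.
by apply/matrixP => i j; rewrite !mxE; congr (A _ _ * B _ _); apply: val_inj.
Qed.

Lemma scale_tensmx (R : comPzRingType) m n p q a (A : 'M[R]_(m, n)) (B : 'M[R]_(p, q)) :
  (a *: A) *t B = a *: (A *t B).
Proof. by apply/matrixP => i j; rewrite !mxE mulrA. Qed.

Lemma tensmxBl (R : pzRingType) m n p q (A A' : 'M[R]_(m, n)) (B : 'M[R]_(p, q)) :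
  (A - A') *t B = A *t B - A' *t B.
Proof. by apply/matrixP => i j; rewrite !mxE mulrBl. Qed.

Lemma mxtens_index_eq m n (ij kl : 'I_m * 'I_n) :
  (mxtens_index ij == mxtens_index kl) = (ij == kl).
Proof. exact: (can_eq (@mxtens_indexK m n)). Qed.

Lemma tens_scalar_mx1 (R : pzRingType) m n (a : R) :
  a%:M *t (1%:M : 'M[R]_n) = a%:M :> 'M_(m * n).
Proof.
apply/matrixP => i j.
case: (mxtens_indexP i) => i1 i2; case: (mxtens_indexP j) => j1 j2.
rewrite tensmxE !mxE mxtens_index_eq xpair_eqE.
by case: (i1 == j1); case: (i2 == j2); rewrite ?mulr1n ?mulr0n ?mulr1 ?mulr0 ?mul0r.
Qed.

Lemma det_castmx (R : comPzRingType) m m' (e : m = m') (A : 'M[R]_m) :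
  \det (castmx (e, e) A) = \det A.
Proof. by case: m' / e; rewrite castmx_id. Qed.

Lemma det_tens1mx (R : comPzRingType) N n (B : 'M[R]_n) :
  \det ((1%:M : 'M_N) *t B) = \det B ^+ N.
Proof.
elim: N => [|N IHN]; first exact: det_mx00.
rewrite (scalar_mx_block 1 N 1) tens_block_mx !tens0mx det_castmx det_ublock IHN.
by rewrite tens_scalar1mx det_castmx exprS.
Qed.

Lemma det_conj_perm (R : comPzRingType) m (A : 'M[R]_m) (s : 'S_m) :
  \det (\matrix_(i, j) A (s i) (s j)) = \det A.
Proof.
have -> : \matrix_(i, j) A (s i) (s j) = row_perm s (col_perm s A).
  by apply/matrixP => i j; rewrite !mxE.
rewrite row_permE col_permE !det_mulmx !det_perm odd_permV.
by rewrite mulrCA -expr2 sqrr_sign mulr1.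
Qed.

Lemma det_tensmx1 (R : comPzRingType) n N (B : 'M[R]_n) :
  \det (B *t (1%:M : 'M_N)) = \det B ^+ N.
Proof.
pose e := mulnC N n.
pose swap p := cast_ord e (@mxtens_index N n
  ((@mxtens_unindex n N p).2, (@mxtens_unindex n N p).1)).
have swapE i1 i2 : swap (mxtens_index (i1, i2)) = cast_ord e (mxtens_index (i2, i1)).
  by rewrite /swap mxtens_indexK.
have swap_inj : injective swap.
  move=> p q; case: (mxtens_indexP p) => i1 i2; case: (mxtens_indexP q) => j1 j2.
  by rewrite !swapE => /cast_ord_inj/(can_inj (@mxtens_indexK _ _)) [-> ->].
rewrite -(det_tens1mx N B) -(det_castmx e) -[RHS](det_conj_perm _ (perm swap_inj)).
congr (\det _); apply/matrixP => p q.
case: (mxtens_indexP p) => i1 i2; case: (mxtens_indexP q) => j1 j2.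
by rewrite tensmxE [RHS]mxE !permE !swapE castmxE /= !cast_ordK tensmxE !mxE mulrC.
Qed.

Lemma castmxZ (R : pzRingType) m n m' n' (e : (m = m') * (n = n')) a (A : 'M[R]_(m, n)) :
  castmx e (a *: A) = a *: castmx e A.
Proof. by case: e => em en; case: m' / em; case: n' / en; rewrite !castmx_id. Qed.

Definition corona_block (R : pzRingType) n N (P : 'M[R]_N) (A : 'M[R]_n) (b : R)
    : 'M[R]_(N + n * N) :=
  block_mx P
    (b *: castmx (mul1n _, erefl) (kron (const_mx 1 : 'M[R]_(1, n)) (1%:M : 'M[R]_N)))
    (b *: castmx (erefl, mul1n _) (kron (const_mx 1 : 'M[R]_(n, 1)) (1%:M : 'M[R]_N)))
    (kron A (1%:M : 'M[R]_N)).

Lemma corona_mxS (R : pzRingType) n (A : 'M[R]_n) b m :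
  corona_mx A b m.+1 =
  castmx (esym (NszS n m), esym (NszS n m)) (corona_block (corona_mx A b m) A b).
Proof. by []. Qed.

Section CoronaBlock.

Variables (R : comNzRingType) (n N : nat).

Let U : 'M[R]_(N, n * N) :=
  castmx (mul1n N, erefl) ((const_mx 1 : 'M_(1, n)) *t (1%:M : 'M_N)).
Let V : 'M[R]_(n * N, N) :=
  castmx (erefl, mul1n N) ((const_mx 1 : 'M_(n, 1)) *t (1%:M : 'M_N)).

Lemma corona_blockE (P : 'M[R]_N) (A : 'M[R]_n) b :
  corona_block P A b = block_mx P (b *: U) (b *: V) (A *t 1%:M).
Proof. by rewrite /corona_block !kronE. Qed.

Lemma mul_ones_tens : U *m V = n%:R%:M.
Proof.
have JJ : (const_mx 1 : 'M[R]_(1, n)) *m const_mx 1 = (n%:R)%:M.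
  apply/matrixP => i j; rewrite !ord1 !mxE /= mulr1n.
  by under eq_bigr do rewrite !mxE mulr1; rewrite sumr_const card_ord.
by rewrite -castmx_mul tensmx_mul JJ mulmx1 tens_scalar_mx castmx_comp castmx_id scalemx1.
Qed.

Lemma tens_mul_ones (A : 'M[R]_n) c :
  A *m const_mx 1 = c *: (const_mx 1 : 'cV_n) -> (A *t 1%:M) *m V = c *: V.
Proof.
move=> A1; rewrite /V -[A *t _](castmx_id (erefl, erefl)) -castmx_mul.
by rewrite tensmx_mul mulmx1 A1 scale_tensmx castmxZ.
Qed.

Lemma det_corona_block (P : 'M[R]_N) (A : 'M[R]_n) b c x :
  A *m const_mx 1 = c *: (const_mx 1 : 'cV_n) ->
  \det (x%:M - corona_block P A b) * (x - c) ^+ N =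
  \det ((x - c) *: (x%:M - P) - (b * b * n%:R)%:M) * \det (x%:M - A) ^+ N.
Proof.
move=> A1.
have elim_block : (x%:M - corona_block P A b) *m block_mx ((x - c)%:M) 0 (b *: V) 1%:M
   = block_mx ((x - c) *: (x%:M - P) - (b * b * n%:R)%:M) (- (b *: U)) 0
              (x%:M - A *t 1%:M).
  rewrite corona_blockE (scalar_mx_block N (n * N) x) opp_block_mx add_block_mx.
  rewrite !sub0r mulmx_block; congr block_mx.
  - rewrite mul_mx_scalar mulNmx -scalemxAl -scalemxAr mul_ones_tens.
    by rewrite scalerA scale_scalar_mx.
  - by rewrite mulmx0 add0r mulmx1.
  - rewrite mul_mx_scalar mulmxBl mul_scalar_mx -scalemxAr (tens_mul_ones A1).
    by apply/matrixP => i j; rewrite !mxE; ring.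
  - by rewrite mulmx0 add0r mulmx1.
have := congr1 determinant elim_block.
rewrite det_mulmx det_lblock det_ublock det_scalar det1 mulr1 => ->.
by rewrite -(tens_scalar_mx1 _ N x) -tensmxBl det_tensmx1.
Qed.

End CoronaBlock.

Lemma char_poly_castmx (R : comNzRingType) m m' (e : m = m') (A : 'M[R]_m) :
  char_poly (castmx (e, e) A) = char_poly A.
Proof. by case: m' / e; rewrite castmx_id. Qed.

Lemma horner_char_poly (R : comNzRingType) m (A : 'M[R]_m) x :
  (char_poly A).[x] = \det (x%:M - A).
Proof.
rewrite /char_poly -[_.[x]]/(horner_eval x _) -det_map_mx.
congr (\det _); apply/matrixP => i j; rewrite !mxE.
by rewrite /= horner_evalE !hornerE hornerMn hornerX.
Qed.

Lemma horner_prod_XsubC (R : comNzRingType) (s : seq R) x :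
  (\prod_(a <- s) ('X - a%:P)).[x] = \prod_(a <- s) (x - a).
Proof. by rewrite horner_prod; apply: eq_bigr => a _; rewrite hornerXsubC. Qed.

Lemma poly_eq_except (R : numDomainType) (p q : {poly R}) (c : R) :
  (forall x, x != c -> p.[x] = q.[x]) -> p = q.
Proof.
move=> pq; apply/eqP; rewrite -subr_eq0; apply/negPn/negP => pq0.
pose xs := [seq c + i.+1%:R | i <- iota 0 (size (p - q))].
suff : (size xs < size (p - q)%R)%N by rewrite size_map size_iota ltnn.
apply: max_poly_roots pq0 _ _.
  apply/allP => _ /mapP[i _ ->]; rewrite /root !hornerE pq ?subrr //.
  by rewrite addrC -subr_eq0 addrK pnatr_eq0.
by rewrite map_inj_uniq ?iota_uniq // => i j /addrI/eqP; rewrite eqr_nat => /eqP [].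
Qed.

Lemma phi_root_prod (R : rcfType) (c D mu x : R) : 0 <= D ->
  (x - phi c D true mu) * (x - phi c D false mu) = (x - c) * (x - mu) - D / 4.
Proof.
move=> D_ge0; rewrite /phi mul1r mulN1r.
have := sqr_sqrtr (addr_ge0 (sqr_ge0 (mu - c)) D_ge0).
move: (Num.sqrt _) => S S2.
have -> : D = S ^+ 2 - (mu - c) ^+ 2 by rewrite S2; ring.
by field.
Qed.

Lemma char_poly_corona_block (R : rcfType) n N (P : 'M[R]_N) (A : 'M[R]_n)
    (b c : R) (s l : seq R) :
  A *m const_mx 1 = c *: (const_mx 1 : 'cV_n) ->
  char_poly P = \prod_(mu <- s) ('X - mu%:P) ->
  char_poly A = \prod_(la <- c :: l) ('X - la%:P) ->
  char_poly (corona_block P A b) =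
  \prod_(mu <- s) (('X - (phi c (4 * n%:R * b ^+ 2) true mu)%:P)
                   * ('X - (phi c (4 * n%:R * b ^+ 2) false mu)%:P))
  * (\prod_(la <- l) ('X - la%:P)) ^+ N.
Proof.
move=> A1 charP charA; set D := 4 * _ * _.
have size_s : N = size s.
  by have := size_char_poly P; rewrite charP size_prod_XsubC => -[].
have D_ge0 : 0 <= D.
  by rewrite /D mulr_ge0 ?sqr_ge0 // mulr_ge0 ?ler0n.
apply: (poly_eq_except (c := c)) => x xNc.
have xc0 : x - c != 0 by rewrite subr_eq0.
pose y := x - b * b * n%:R / (x - c).
have schur : (x - c) *: (x%:M - P) - (b * b * n%:R)%:M = (x - c) *: (y%:M - P).
  apply/matrixP => i j; rewrite !mxE; case: (i == j); rewrite ?mulr1n ?mulr0n /y.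
    by field.
  by rewrite subr0.
have rescale : (x - c) ^+ N * \prod_(mu <- s) (y - mu)
    = \prod_(mu <- s) ((x - c) * (x - mu) - D / 4).
  rewrite size_s; elim: (s) => [|mu t IH]; first by rewrite !big_nil mulr1.
  rewrite !big_cons /= exprS -IH.
  have -> : (x - c) * (x - mu) - D / 4 = (x - c) * (y - mu) by rewrite /y /D; field.
  ring.
have := det_corona_block P b x A1.
rewrite schur detZ -!horner_char_poly charP charA !horner_prod_XsubC big_cons.
move=> eq_det; rewrite hornerM horner_exp horner_prod_XsubC horner_prod.
under eq_bigr do rewrite hornerM !hornerXsubC phi_root_prod //.
by apply: (mulIf (expf_neq0 N xc0)); rewrite eq_det -rescale exprMn; ring.
Qed.

Lemma natr_card (R : pzSemiRingType) (T : finType) (A : {set T}) :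
  #|A|%:R = \sum_x (x \in A)%:R :> R.
Proof.
by rewrite -sum1_card natr_sum big_mkcond; apply: eq_bigr => x _; case: (x \in A).
Qed.

Lemma uniform_hadj_row_sum (R : pzRingType) n (E : {set {set 'I_n}}) k i :
  (forall e, e \in E -> #|e| = k) ->
  \sum_j hadj R E i j = #|[set e in E | i \in e]|%:R * (k%:R - 1).
Proof.
move=> Ek.
have entry j : hadj R E i j = \sum_e ((e \in E) && (i \in e) && (j \in e :\ i))%:R.
  rewrite mxE; have [<-|ij] := eqVneq i j.
    by rewrite big1 // => e _; rewrite setD11 andbF.
  by rewrite natr_card; apply: eq_bigr => e _; rewrite !inE eq_sym ij andbA.
under eq_bigr do rewrite entry.
rewrite exchange_big natr_card big_distrl /=; apply: eq_bigr => e _.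
rewrite inE; have [/andP[eE ie]|] := boolP ((e \in E) && (i \in e)); last first.
  by move/negbTE=> eEi; rewrite mul0r big1 // => j _; rewrite eEi.
have k_ge1 : (1 <= k)%N by rewrite -(Ek e eE) card_gt0; apply/set0Pn; exists i.
rewrite mul1r -(natrB _ k_ge1) -(Ek e eE) (cardsD1 i e) ie add1n subn1 natr_card.
by apply: eq_bigr.
Qed.

Lemma regular_hadj_mul_ones (R : pzRingType) n (E : {set {set 'I_n}}) k r :
  kr_regular E k r ->
  hadj R E *m const_mx 1 = (r%:R * (k%:R - 1)) *: (const_mx 1 : 'cV_n).
Proof.
case=> Ek Er; apply/matrixP => i j; rewrite [RHS]mxE [const_mx _ _ _]mxE mulr1 mxE.
under eq_bigr do rewrite [const_mx _ _ _]mxE mulr1.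
by rewrite (uniform_hadj_row_sum _ _ Ek) Er.
Qed.

Lemma big_flatten_nseq (R : comNzRingType) (T : Type) t (s : seq T) (F : T -> R) :
  \prod_(x <- flatten (nseq t s)) F x = (\prod_(x <- s) F x) ^+ t.
Proof.
rewrite big_flatten big_nseq; elim: t => [|t IHt] /=; first by rewrite expr0.
by rewrite IHt exprS.
Qed.

Lemma big_corona_spec (R : rcfType) n (c D : R) (lam : seq R) m (F : R -> {poly R}) :
  \prod_(x <- corona_spec n c D lam m) F x =
  (\prod_(l <- lam) \prod_(x <- Phi c D m.-1 l) F x) *
  \prod_(j <- iota 0 m.-1)
     (\prod_(l <- behead lam) \prod_(x <- Phi c D j l) F x) ^+ (n * (n + 1) ^ (m - j - 2)).
Proof.
rewrite /corona_spec big_cat !big_flatten !big_map; congr (_ * _).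
by apply: eq_bigr => j _; rewrite big_flatten_nseq big_flatten big_map.
Qed.

Lemma prod_Phi_succ (R : rcfType) (c D : R) j l :
  \prod_(x <- Phi c D j.+1 l) ('X - x%:P) =
  \prod_(x <- Phi c D j l) (('X - (phi c D true x)%:P) * ('X - (phi c D false x)%:P)).
Proof.
rewrite /= big_flatten big_map; apply: eq_bigr => y _.
by rewrite big_cons big_seq1.
Qed.

Lemma prod_corona_spec_succ (R : rcfType) n (c D : R) (lam' : seq R) m :
  \prod_(x <- corona_spec n c D (c :: lam') m.+2) ('X - x%:P)
  = \prod_(mu <- corona_spec n c D (c :: lam') m.+1)
       (('X - (phi c D true mu)%:P) * ('X - (phi c D false mu)%:P))
    * (\prod_(x <- lam') ('X - x%:P)) ^+ Nsz n m.
Proof.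
rewrite !big_corona_spec /=.
under eq_bigr => l _ do rewrite prod_Phi_succ.
have -> : iota 1 m = [seq j.+1 | j <- iota 0 m] by exact: (iotaDl 1 0 m).
rewrite !big_cons big_map -!mulrA.
congr (_ * (_ * _)); rewrite mulrC; congr (_ * _).
  apply: eq_bigr => j _; rewrite subSS; congr (_ ^+ _).
  by apply: eq_bigr => l _; rewrite prod_Phi_succ.
rewrite subn0 !subSS subn0 /Nsz; congr (_ ^+ _).
by apply: eq_bigr => l _; rewrite big_seq1.
Qed.

Theorem theorem5p1 (R : rcfType) (n k r : nat) (E : {set {set 'I_n}})
    (lam' : seq R) :
  is_hypergraph E ->
  kr_regular E k r ->
  char_poly (hadj R E)
    = \prod_(x <- (r%:R * (k%:R - 1)) :: lam') ('X - x%:P) ->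
  forall m : nat, (1 <= m)%N ->
    char_poly (corona_mx (hadj R E) (bcoef n k)%:R m.-1)
    = \prod_(x <- corona_spec n (r%:R * (k%:R - 1))
                     (4 * n%:R * ((bcoef n k)%:R) ^+ 2)
                     ((r%:R * (k%:R - 1)) :: lam') m)
        ('X - x%:P).
Proof.
move=> _ regE charA [//|m] _ /=.
have A1 := regular_hadj_mul_ones R regE.
elim: m => [|m IHm].
  rewrite char_poly_castmx charA big_corona_spec big_nil mulr1.
  by apply: eq_bigr => l _; rewrite big_seq1.
rewrite corona_mxS char_poly_castmx (char_poly_corona_block _ A1 IHm charA).
by rewrite prod_corona_spec_succ.
Qed.
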